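(* Consider the Single-Demand Facility Location setting with $n$ facilities $F=[n]$, positive capacities $s_1,\dots,s_n$ and demand $D>0$. Let $\mathcal{R}=\{(x^1,y^1),\dots,(x^r,y^r)\}$ be the set of all canonical feasible solutions. Then every feasible solution $(x,y)$ can be written as $(x,y)=\sum_{k=1}^r\lambda_k(x^k,y^k)$ with $\lambda_k\geqslant 0$ for all $k$ and $\sum_{k=1}^r\lambda_k=1$.
   Context: A feasible solution is a pair $(x,y)$ with $y\in\{0,1\}^n$ and $x\in[0,1]^n$ such that $\sum_{i=1}^n x_i=1$ and $0\leqslant x_iD\leqslant y_is_i$ for all $i\in F$. For a feasible solution let $B=\{i\in F: y_i=1\}$ and $\widetilde{F}_2=\{i\in B: 0<x_iD<s_iy_i\}$. A feasible solution is canonical if $|\widetilde{F}_2|\leqslant 1$, i.e. at most one facility supplies a nonzero amount strictly below its capacity. (The set $\mathcal{R}$ is finite.) *)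

From HB Require Import structures.
From mathcomp Require Import all_boot all_order all_algebra.
Set Implicit Arguments. Unset Strict Implicit. Unset Printing Implicit Defensive.
Import Order.TTheory GRing.Theory Num.Theory.
Local Open Scope ring_scope.

(* Single-Demand Facility Location: facilities F = 'I_n, capacities s,
   demand D.  y : 'I_n -> bool encodes y in {0,1}^n (y_i = (y i)%:R). *)

Definition feasible (R : realFieldType) (n : nat) (s : 'I_n -> R) (D : R)
    (x : 'I_n -> R) (y : 'I_n -> bool) : Prop :=
  (forall i, 0 <= x i <= 1) /\
  (\sum_(i < n) x i = 1) /\
  (forall i, 0 <= x i * D <= (y i)%:R * s i).

Definition openB (n : nat) (y : 'I_n -> bool) : {set 'I_n} := [set i | y i].

Definition F2t (R : realFieldType) (n : nat) (s : 'I_n -> R) (D : R)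
    (x : 'I_n -> R) (y : 'I_n -> bool) : {set 'I_n} :=
  [set i in openB y | (0 < x i * D) && (x i * D < s i * (y i)%:R)].

Definition canonical_sol (R : realFieldType) (n : nat) (s : 'I_n -> R) (D : R)
    (x : 'I_n -> R) (y : 'I_n -> bool) : Prop :=
  feasible s D x y /\ (#|F2t s D x y| <= 1)%N.

From HB Require Import structures.
From mathcomp Require Import all_boot all_order all_algebra.
From mathcomp Require Import ring lra.
Import Order.TTheory GRing.Theory Num.Theory.
Set Implicit Arguments. Unset Strict Implicit.
Local Open Scope ring_scope.

(* Fix the open set y and induct on the number of facilities that are open but
   neither empty nor full.  If two of them, i and j, remain, moving supply from
   j to i until i is full or j is empty, and moving it from i to j until j is
   full or i is empty, gives two feasible solutions with fewer such facilities,
   and x lies on the segment between them. *)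

Section ConvexHull.
Variables (R : numDomainType) (T : Type) (P : (T -> R) -> Prop).

Definition in_conv_hull (x : T -> R) : Prop :=
  exists r (xs : 'I_r -> T -> R) (lam : 'I_r -> R),
    [/\ forall k, P (xs k), forall k, 0 <= lam k, \sum_(k < r) lam k = 1
      & forall i, x i = \sum_(k < r) lam k * xs k i].

Lemma in_conv_hull_point x : P x -> in_conv_hull x.
Proof.
move=> Px; exists 1%N, (fun _ => x), (fun _ => 1).
by split=> [//|//||i]; rewrite big_ord1 ?mul1r.
Qed.

Lemma in_conv_hull_combine x x1 x2 a1 a2 :
  in_conv_hull x1 -> in_conv_hull x2 -> 0 <= a1 -> 0 <= a2 -> a1 + a2 = 1 ->
  (forall i, x i = a1 * x1 i + a2 * x2 i) -> in_conv_hull x.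
Proof.
move=> [r1 [xs1 [lam1 [P1 lam1_ge0 lam1_sum x1E]]]].
move=> [r2 [xs2 [lam2 [P2 lam2_ge0 lam2_sum x2E]]]] a1_ge0 a2_ge0 a_sum xE.
exists (r1 + r2)%N.
exists (fun k => match split k with inl k1 => xs1 k1 | inr k2 => xs2 k2 end).
exists (fun k => match split k with
                 | inl k1 => a1 * lam1 k1 | inr k2 => a2 * lam2 k2 end).
split=> [k|k||i]; first by case: splitP.
- by case: splitP => k' _; apply: mulr_ge0.
- rewrite big_split_ord /=.
  under eq_bigr do rewrite (unsplitK (inl _)).
  under [X in _ + X]eq_bigr do rewrite (unsplitK (inr _)).
  by rewrite -!mulr_sumr lam1_sum lam2_sum !mulr1.
- rewrite big_split_ord /=.
  under eq_bigr do rewrite (unsplitK (inl _)) -mulrA.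
  under [X in _ + X]eq_bigr do rewrite (unsplitK (inr _)) -mulrA.
  by rewrite -!mulr_sumr -x1E -x2E.
Qed.

End ConvexHull.

Section Transfer.
Variables (R : realFieldType) (n : nat) (s : 'I_n -> R) (D : R).
Hypothesis D_gt0 : 0 < D.
Variable y : 'I_n -> bool.

Lemma feasible_intro x :
  (forall k, 0 <= x k /\ x k * D <= (y k)%:R * s k) -> \sum_(k < n) x k = 1 ->
  feasible s D x y.
Proof.
move=> x_bounds x_sum.
have x_ge0 k : 0 <= x k by case: (x_bounds k).
split; [move=> k | split=> // k].
- rewrite x_ge0 -x_sum (bigD1 k) //= lerDl.
  by apply: sumr_ge0 => l _.
- by have [_ ->] := x_bounds k; rewrite andbT mulr_ge0 // ltW.
Qed.

Lemma in_F2t x i : (i \in F2t s D x y) = y i && (0 < x i < s i / D).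
Proof.
rewrite !inE ltr_pdivlMr // pmulr_lgt0 //.
by case: (y i); rewrite ?mulr1 ?mulr0 //= andbC; case: ltgtP.
Qed.

Definition transfer (x : 'I_n -> R) (i j : 'I_n) (t : R) : 'I_n -> R :=
  fun k => x k + t * ((k == i)%:R - (k == j)%:R).

Section TransferPair.
Variables (x : 'I_n -> R) (i j : 'I_n) (t : R).
Hypothesis neq_ij : i != j.

Lemma transfer_src : transfer x i j t i = x i + t.
Proof. by rewrite /transfer eqxx (negbTE neq_ij) subr0 mulr1. Qed.

Lemma transfer_dst : transfer x i j t j = x j - t.
Proof. by rewrite /transfer eqxx eq_sym (negbTE neq_ij) sub0r mulrN1. Qed.

Lemma transfer_other k : k != i -> k != j -> transfer x i j t k = x k.
Proof. by move=> /negbTE ki /negbTE kj; rewrite /transfer ki kj subrr mulr0 addr0. Qed.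

Lemma sum_transfer : \sum_(k < n) transfer x i j t k = \sum_(k < n) x k.
Proof.
have sum_delta l : \sum_(k < n) ((k == l)%:R : R) = 1.
  by rewrite (bigD1 l) //= eqxx big1 ?addr0 // => k /negbTE->.
by rewrite big_split /= -mulr_sumr sumrB !sum_delta subrr mulr0 addr0.
Qed.

Hypotheses (Fi : i \in F2t s D x y) (Fj : j \in F2t s D x y).

Lemma feasible_transfer :
  feasible s D x y -> 0 <= t -> t <= s i / D - x i -> t <= x j ->
  feasible s D (transfer x i j t) y.
Proof.
move=> [_ [x_sum x_cap]] t_ge0 t_le_room t_le_xj.
move: Fi Fj; rewrite !in_F2t => /andP[yi /andP[xi_gt0 _]] /andP[yj /andP[_ xj_lt]].
apply: feasible_intro; last by rewrite sum_transfer.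
move=> k; have [->|ki] := eqVneq k i.
  by rewrite transfer_src yi mul1r -ler_pdivlMr //; split; lra.
have [->|kj] := eqVneq k j.
  by rewrite transfer_dst yj mul1r -ler_pdivlMr //; split; lra.
rewrite transfer_other //; have /andP[xkD_ge0 ->] := x_cap k.
by rewrite -(pmulr_lge0 _ D_gt0).
Qed.

Lemma F2t_transfer_sub : F2t s D (transfer x i j t) y \subset F2t s D x y.
Proof.
apply/subsetP => k; have [->|ki] := eqVneq k i; first by [].
have [->|kj] := eqVneq k j; first by [].
by rewrite !in_F2t transfer_other.
Qed.

End TransferPair.

Definition max_transfer (x : 'I_n -> R) (i j : 'I_n) : R :=
  Num.min (s i / D - x i) (x j).

Lemma max_transfer_gt0 x i j :
  i \in F2t s D x y -> j \in F2t s D x y -> 0 < max_transfer x i j.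
Proof.
rewrite !in_F2t => /andP[_ /andP[_ xi_lt]] /andP[_ /andP[xj_gt0 _]].
by rewrite lt_min subr_gt0 xi_lt.
Qed.

Lemma feasible_max_transfer x i j :
  i != j -> i \in F2t s D x y -> j \in F2t s D x y -> feasible s D x y ->
  feasible s D (transfer x i j (max_transfer x i j)) y.
Proof.
move=> neq_ij Fi Fj x_feas; apply: feasible_transfer => //.
- exact/ltW/max_transfer_gt0.
- by rewrite ge_min lexx.
- by rewrite ge_min lexx orbT.
Qed.

(* The maximal transfer either fills i or empties j. *)
Lemma card_F2t_max_transfer x i j :
  i != j -> i \in F2t s D x y -> j \in F2t s D x y ->
  (#|F2t s D (transfer x i j (max_transfer x i j)) y| < #|F2t s D x y|)%N.
Proof.
move=> neq_ij Fi Fj; apply/proper_card/properP.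
split; first exact: F2t_transfer_sub.
rewrite /max_transfer; case: leP => [room_le|xj_lt].
- by exists i; rewrite // in_F2t transfer_src // addrC subrK ltxx !andbF.
- by exists j; rewrite // in_F2t transfer_dst // subrr ltxx andbF.
Qed.

Lemma transfer_segment x i j t1 t2 : 0 < t1 -> 0 < t2 -> forall k,
  x k = t2 / (t1 + t2) * transfer x i j t1 k + t1 / (t1 + t2) * transfer x j i t2 k.
Proof. by move=> t1_gt0 t2_gt0 k; rewrite /transfer; field; rewrite gt_eqF ?addr_gt0. Qed.

Local Notation canonical_hull := (in_conv_hull (fun z => canonical_sol s D z y)).

Lemma feasible_in_canonical_hull x : feasible s D x y -> canonical_hull x.
Proof.
move: {2}#|_| (leqnn #|F2t s D x y|) => m; elim: m x => [|m IH] x card_le x_feas.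
  by apply: in_conv_hull_point; split=> //; apply: leq_trans card_le _.
have [card_le1|/card_gt1P[i [j [Fi Fj neq_ij]]]] := leqP #|F2t s D x y| 1.
  exact: in_conv_hull_point.
have hull_max_transfer u v : u != v -> u \in F2t s D x y -> v \in F2t s D x y ->
    canonical_hull (transfer x u v (max_transfer x u v)).
  move=> neq_uv Fu Fv; apply: IH; last exact: feasible_max_transfer.
  by rewrite -ltnS (leq_trans _ card_le) // card_F2t_max_transfer.
have t1_gt0 := max_transfer_gt0 Fi Fj; have t2_gt0 := max_transfer_gt0 Fj Fi.
apply: (in_conv_hull_combine (hull_max_transfer i j neq_ij Fi Fj)
  (hull_max_transfer j i _ Fj Fi) _ _ _ (transfer_segment x i j t1_gt0 t2_gt0)).
- by rewrite eq_sym.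
- by rewrite divr_ge0 ?ltW ?addr_gt0.
- by rewrite divr_ge0 ?ltW ?addr_gt0.
- by field; rewrite gt_eqF ?addr_gt0.
Qed.

End Transfer.

Theorem lemma2 (R : realFieldType) (n : nat) (s : 'I_n -> R) (D : R)
    (hs : forall i, 0 < s i) (hD : 0 < D)
    (x : 'I_n -> R) (y : 'I_n -> bool) :
  feasible s D x y ->
  exists (r : nat) (xs : 'I_r -> 'I_n -> R) (ys : 'I_r -> 'I_n -> bool)
         (lam : 'I_r -> R),
    (forall k, canonical_sol s D (xs k) (ys k)) /\
    (forall k, 0 <= lam k) /\
    (\sum_(k < r) lam k = 1) /\
    (forall i, x i = \sum_(k < r) lam k * xs k i) /\
    (forall i, (y i)%:R = \sum_(k < r) lam k * (ys k i)%:R :> R).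
Proof.
move=> x_feas.
have [r [xs [lam [xs_can lam_ge0 lam_sum xE]]]] :=
  feasible_in_canonical_hull hD x_feas.
exists r, xs, (fun _ => y), lam; do 4!split=> //.
by move=> i; rewrite -mulr_suml lam_sum mul1r.
Qed.
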